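(* Let $a\in\mathbb{R}$, $\sigma>0$, $\gamma>0$, $\lambda>0$, $T\ge1$, channel transition probabilities $p_{cc'}$, and let $Q_t$ be defined on $\mathbb{R}\times\{0,1\}\times\{0,1\}$ by the value iteration in the context. Then there exists an optimal scheduling policy $\phi^\star$ for the original risk-sensitive MDP of threshold type: for each $t\in\{1,\ldots,T\}$ and $c\in\{0,1\}$ there is a threshold $\Delta^\star_t(c)\in[0,\infty]$ such that $\phi^\star_t(\Delta,c)$ minimizes $Q_t(\Delta,c;\cdot)$ for all $\Delta\in\mathbb{R}$, $\phi^\star_t(\Delta,c)=1$ whenever $|\Delta|>\Delta^\star_t(c)$, and $\phi^\star_t(\Delta,c)=0$ whenever $|\Delta|<\Delta^\star_t(c)$.
   Context: Model: $x(t+1)=ax(t)+w(t)$ with $w(t)$ i.i.d. $\mathcal{N}(0,\sigma^2)$; Gilbert–Elliott channel state $c(t)\in\{0,1\}$ a Markov chain with $p_{01},p_{10}\in[0,1]$, $p_{00}=1-p_{01}$, $p_{11}=1-p_{10}$; error $\Delta(t)=x(t)-a\hat x(t-1)$; cost $d(\Delta,c,u)=\lambda u+(1-uc)\Delta^2$; objective $\min\mathbb{E}\exp(\gamma\sum_{t=0}^T d(\Delta(t),c(t),u(t)))$. With $\psi(v)=e^{-v^2/(2\sigma^2)}$, value iteration: $V_0\equiv1$, $Q_{t+1}(\Delta,c;0)=e^{\gamma\Delta^2}\sum_{c_+\in\{0,1\}}p_{cc_+}\int_{\mathbb{R}}\psi(\Delta_+-a\Delta)V_t(\Delta_+,c_+)d\Delta_+$,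 $Q_{t+1}(\Delta,c;1)=(1-c)e^{\gamma(\lambda+\Delta^2)}\sum_{c_+}p_{cc_+}\int_{\mathbb{R}}\psi(\Delta_+-a\Delta)V_t(\Delta_+,c_+)d\Delta_++c\,e^{\gamma\lambda}\sum_{c_+}p_{cc_+}\int_{\mathbb{R}}\psi(\Delta_+)V_t(\Delta_+,c_+)d\Delta_+$, $V_{t+1}=\min_{u\in\{0,1\}}Q_{t+1}(\cdot,\cdot;u)$. A deterministic Markov policy choosing at stage $t$ a minimizer of $Q_t(\Delta,c;\cdot)$ is optimal. A policy is of threshold type if it transmits ($u=1$) only when $|\Delta|$ exceeds a threshold depending on $t$ and the channel state. *)

(* values of the value iteration live in \bar R,
   since the Gaussian integrals of exponentials of squares may be +oo. *)
From HB Require Import structures.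
From mathcomp Require Import all_boot all_order all_algebra.
From mathcomp Require Import all_classical all_reals all_analysis.
Set Implicit Arguments. Unset Strict Implicit. Unset Printing Implicit Defensive.
Import Order.TTheory GRing.Theory Num.Theory.
Import numFieldNormedType.Exports.
Local Open Scope classical_set_scope.
Local Open Scope ring_scope.

Section Defs.
Variable R : realType.

(* channel state c : bool, false = 0 (bad), true = 1 (good) *)
Definition chanP (p01 p10 : R) (c c' : bool) : R :=
  match c, c' with
  | false, false => 1 - p01
  | false, true  => p01
  | true,  false => p10
  | true,  true  => 1 - p10
  end.

Definition psi (sigma v : R) : R := expR (- (v ^+ 2) / (2 * sigma ^+ 2)).

Definition expect (sigma p01 p10 : R) (V : R -> bool -> \bar R) (c : bool) (m : R)
  : \bar R :=
  ((chanP p01 p10 c false)%:E *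
     \int[lebesgue_measure]_(x in [set: R]) ((psi sigma (x - m))%:E * V x false)
   + (chanP p01 p10 c true)%:E *
     \int[lebesgue_measure]_(x in [set: R]) ((psi sigma (x - m))%:E * V x true))%E.

(* Q_{t+1}(Delta, c; u) computed from V_t; u : bool, false = 0, true = 1 *)
Definition Qstep (a sigma gamma lambda p01 p10 : R) (V : R -> bool -> \bar R)
  (D : R) (c : bool) (u : bool) : \bar R :=
  if u then
    (if c then ((expR (gamma * lambda))%:E * expect sigma p01 p10 V c 0)%E
     else ((expR (gamma * (lambda + D ^+ 2)))%:E
              * expect sigma p01 p10 V c (a * D))%E)
  else ((expR (gamma * D ^+ 2))%:E * expect sigma p01 p10 V c (a * D))%E.

Fixpoint Vfun (a sigma gamma lambda p01 p10 : R) (t : nat) : R -> bool -> \bar R :=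
  match t with
  | 0 => fun _ _ => 1%E
  | t'.+1 => fun D c =>
      Order.min (Qstep a sigma gamma lambda p01 p10 (Vfun a sigma gamma lambda p01 p10 t') D c false)
                (Qstep a sigma gamma lambda p01 p10 (Vfun a sigma gamma lambda p01 p10 t') D c true)
  end.

(* Q_t for t >= 1 *)
Definition Qfun (a sigma gamma lambda p01 p10 : R) (t : nat) (D : R) (c u : bool)
  : \bar R :=
  Qstep a sigma gamma lambda p01 p10 (Vfun a sigma gamma lambda p01 p10 t.-1) D c u.

End Defs.

(** The value functions [V_t] and the state-action costs [Q_t(., c; u)] are
    even in [Delta] and nondecreasing in [|Delta|].  This is preserved by the
    value iteration because Gaussian smoothing preserves it: to compare the
    smoothings at [0 <= m1 <= m2], pair each [x > (m1 + m2) / 2] with its mirror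
    image [m1 + m2 - x]; the Gaussian weights of the pair are swapped and the
    larger weight sits on the larger value, so a rearrangement inequality
    concludes.  Hence in the good channel, where the cost of transmitting does
    not depend on [Delta], transmitting is optimal exactly beyond the supremum
    of the [|Delta|] at which waiting is no worse; in the bad channel,
    transmitting only adds the factor [exp(gamma lambda) >= 1], so waiting is
    always optimal. *)
From HB Require Import structures.
From mathcomp Require Import all_boot all_order all_algebra.
From mathcomp Require Import all_classical all_reals all_analysis.
From mathcomp Require Import measurable_realfun ring lra.
Set Implicit Arguments. Unset Strict Implicit. Unset Printing Implicit Defensive.
Import Order.TTheory GRing.Theory Num.Theory.
Local Open Scope classical_set_scope.
Local Open Scope ring_scope.

Section radially_nondecreasing.
Variable R : realType.
Implicit Types (f g : R -> \bar R) (x y : R).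

Definition radially_nondecreasing f := forall x y, `|x| <= `|y| -> (f x <= f y)%E.

Lemma radial_oppr f : radially_nondecreasing f -> forall x, f (- x) = f x.
Proof. by move=> f_rad x; apply/eqP; rewrite eq_le !f_rad// normrN. Qed.

Lemma radial_normr f : radially_nondecreasing f -> forall x, f `|x| = f x.
Proof. by move=> f_rad x; apply/eqP; rewrite eq_le !f_rad// normr_id. Qed.

Lemma radial_min f g : radially_nondecreasing f -> radially_nondecreasing g ->
  radially_nondecreasing (fun x => Order.min (f x) (g x)).
Proof. by move=> f_rad g_rad x y xy; rewrite le_min !ge_min f_rad// g_rad// orbT. Qed.

Lemma nondecreasing_emeasurable f : {homo f : x y / x <= y >-> (x <= y)%E} ->
  measurable_fun [set: R] f.
Proof.
move=> f_nd; apply: (measurability _ (ErealGenCInfty.measurableE R)) => //.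
move=> /= _ [_ [r ->] <-]; apply: measurableI => //.
apply: is_interval_measurable => u v /=; rewrite !in_itv/= !andbT => fu fv w.
by move=> /andP[uw _]; rewrite in_itv/= andbT (le_trans fu)// f_nd.
Qed.

Lemma radial_measurable f : radially_nondecreasing f -> measurable_fun [set: R] f.
Proof.
move=> f_rad.
have -> : f = (fun y => f (Num.max y 0)) \o (fun x => `|x|).
  by apply/funext => x /=; rewrite max_l ?radial_normr.
apply: measurableT_comp; last exact: normr_measurable.
apply: nondecreasing_emeasurable => u v uv; apply: f_rad.
have max_ge0 (w : R) : 0 <= Num.max w 0 by rewrite le_max lexx orbT.
by rewrite !ger0_norm// ge_max !le_max uv lexx !orbT.
Qed.

End radially_nondecreasing.

Section lebesgue_reflection.
Variable R : realType.
Local Notation mu := (@lebesgue_measure R).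

Lemma measurable_subr (s : R) : measurable_fun [set: measurableTypeR R]
  (fun x : measurableTypeR R => (s - x : measurableTypeR R)).
Proof. exact: measurable_funB. Qed.

Lemma lebesgue_measure_reflect (s : R) (A : set R) : measurable A ->
  mu ((fun x => s - x) @^-1` A) = mu A.
Proof.
move=> mA.
have := @lebesgue_measure_unique R
  (measure_function_pushforward__canonical__measure_function_Measure mu
    (measurable_subr s)) _ A mA.
move=> /= -> // _ [[a b]] _ <-; rewrite /pushforward /=.
have -> : (fun x => s - x) @^-1` `]a, b]%classic = `[s - b, s - a[%classic.
  by apply/seteqP; split => x /=; rewrite !in_itv/= => /andP[? ?]; apply/andP; split; lra.
rewrite !lebesgue_measure_itv/= !lte_fin.
have -> : (s - b < s - a) = (a < b) by apply/idP/idP => ?; lra.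
by case: ifP => // _; congr (_%:E); lra.
Qed.

Lemma ge0_integral_reflect (s : R) (D : set R) (F : R -> \bar R) : measurable D ->
  measurable_fun D F -> (forall x, D x -> (0 <= F x)%E) ->
  (\int[mu]_(x in D) F x = \int[mu]_(x in (fun x => s - x)%R @^-1` D) F (s - x)%R)%E.
Proof.
move=> mD mF F_ge0.
rewrite -(@ge0_integral_pushforward _ _ _ _ R _ (measurable_subr s) mu D F mD mF);
  last by move=> y /set_mem; exact: F_ge0.
apply: eq_measure_integral; first exact: measurable_subr.
by move=> mf A mA _; exact: esym (lebesgue_measure_reflect s mA).
Qed.

Lemma ge0_integral_fold (s : R) (H : R -> \bar R) :
  measurable_fun [set: R] H -> (forall x, (0 <= H x)%E) ->
  (\int[mu]_(x in [set: R]) H x =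
   \int[mu]_(x in `](s / 2)%R, +oo[) H x + \int[mu]_(x in `](s / 2)%R, +oo[) H (s - x)%R)%E.
Proof.
move=> mH H_ge0.
have -> : [set: R] = `]s / 2, +oo[ `|` `]-oo, s / 2].
  apply/seteqP; split => x //= _.
  by rewrite !in_itv /= andbT; case: (ltP (s / 2) x); [left | right].
have disj : [disjoint `]s / 2, +oo[ & `]-oo, s / 2]].
  by apply/disj_setPS => x [] /=; rewrite !in_itv /= andbT => ? ?; lra.
rewrite ge0_integral_setU//; last exact: measurable_funTS.
congr (_ + _)%E.
rewrite (ge0_integral_reflect s (measurable_itv _)); first last.
- by move=> x _; exact: H_ge0.
- exact: measurable_funTS (measurableT_comp mH (measurable_subr s)).
have -> : (fun x => s - x) @^-1` `](s / 2)%R, +oo[ = `]-oo, s / 2] `\ (s / 2).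
  apply/seteqP; split => x /=; rewrite !in_itv /=.
  - by move=> ?; split; [lra | move=> ?; lra].
  - by move=> [? /eqP]; rewrite neq_lt => /orP[]; lra.
have mD : measurable (`]-oo, (s / 2)%R] `\ (s / 2)%R : set R).
  by apply: measurableD => //; exact: measurable_set1.
rewrite -(integral_setD1 mD (measurable_funTS mH)).
by apply: eq_integral => x _; congr H; lra.
Qed.

End lebesgue_reflection.

Lemma lee_rearrange (R : realType) (A B : R) (F G : \bar R) :
  0 < B <= A -> (0 <= G <= F)%E -> (B%:E * F + A%:E * G <= A%:E * F + B%:E * G)%E.
Proof.
move=> /andP[B_gt0 BA] /andP[G_ge0 GF]; have A_gt0 : 0 < A by exact: lt_le_trans BA.
case: F GF => [r| |] GF; last by case: G G_ge0 GF.
- case: G G_ge0 GF => [q| |] // G_ge0 GF; rewrite !lee_fin in G_ge0 GF.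
  rewrite -!EFinM -!EFinD lee_fin.
  have : 0 <= (A - B) * (r - q) by apply: mulr_ge0; lra.
  nra.
- rewrite !gt0_muley ?lte_fin//.
  by case: G G_ge0 GF => [q| |] //= _ _; rewrite ?gt0_muley ?lte_fin.
Qed.

Section gaussian_smoothing.
Variables (R : realType) (s : R).
Local Notation mu := (@lebesgue_measure R).

Lemma psi_gt0 v : 0 < psi s v.
Proof. exact: expR_gt0. Qed.

Lemma psiN v : psi s (- v) = psi s v.
Proof. by rewrite /psi sqrrN. Qed.

Lemma le_psi u v : v ^+ 2 <= u ^+ 2 -> psi s u <= psi s v.
Proof.
move=> vu; rewrite /psi ler_expR !mulNr lerN2 ler_wpM2r// invr_ge0.
by rewrite mulr_ge0// sqr_ge0.
Qed.

Lemma measurable_psi_shift m : measurable_fun [set: R] (fun x => psi s (x - m)).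
Proof.
apply: measurableT_comp (@measurable_expR R) _.
apply: measurable_funM => //; apply: measurable_funN.
by apply: measurable_funX; exact: measurable_funB.
Qed.

Definition gauss_conv (f : R -> \bar R) (m : R) : \bar R :=
  (\int[mu]_(x in [set: R]) ((psi s (x - m))%:E * f x))%E.

Variable f : R -> \bar R.
Hypotheses (f_ge0 : forall x, (0 <= f x)%E) (f_rad : radially_nondecreasing f).

Let integrand m x := ((psi s (x - m))%:E * f x)%E.

Let integrand_ge0 m x : (0 <= integrand m x)%E.
Proof. by rewrite mule_ge0// lee_fin ltW// psi_gt0. Qed.

Let measurable_integrand m : measurable_fun [set: R] (integrand m).
Proof.
apply: emeasurable_funM; last exact: radial_measurable.
by apply/measurable_EFinP; exact: measurable_psi_shift.
Qed.

Let measurable_integrand_reflect S m :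
  measurable_fun [set: R] (fun x => integrand m (S - x)).
Proof. exact: measurableT_comp (measurable_integrand m) (measurable_subr S). Qed.

Lemma gauss_conv_ge0 m : (0 <= gauss_conv f m)%E.
Proof. by apply: integral_ge0 => x _; exact: integrand_ge0. Qed.

Lemma gauss_convN m : gauss_conv f (- m) = gauss_conv f m.
Proof.
rewrite /gauss_conv (ge0_integral_reflect 0 measurableT (measurable_integrand (- m))
  (fun x _ => integrand_ge0 (- m) x)) preimage_setT.
apply: eq_integral => x _.
by rewrite /integrand sub0r (radial_oppr f_rad) -psiN opprB opprK addrC.
Qed.

Lemma gauss_conv_fold S m : gauss_conv f m =
  (\int[mu]_(x in `](S / 2)%R, +oo[) (integrand m x + integrand m (S - x)%R))%E.
Proof.
rewrite /gauss_conv (ge0_integral_fold S (measurable_integrand m))//.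
by rewrite ge0_integralD//; apply: measurable_funTS;
  [exact: measurable_integrand | exact: measurable_integrand_reflect].
Qed.

Lemma gauss_conv_le m1 m2 : 0 <= m1 <= m2 -> (gauss_conv f m1 <= gauss_conv f m2)%E.
Proof.
move=> /andP[m1_ge0 m12].
rewrite !(gauss_conv_fold (m1 + m2)); apply: ge0_le_integral => //.
- by move=> x _; rewrite adde_ge0.
- by apply/measurable_funTS/emeasurable_funD;
    [exact: measurable_integrand | exact: measurable_integrand_reflect].
- by apply/measurable_funTS/emeasurable_funD;
    [exact: measurable_integrand | exact: measurable_integrand_reflect].
move=> x /=; rewrite in_itv /= andbT /integrand => mid_x.
have -> : m1 + m2 - x - m1 = - (x - m2) by ring.
have -> : m1 + m2 - x - m2 = - (x - m1) by ring.
rewrite !psiN; apply: lee_rearrange.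
- rewrite psi_gt0 le_psi//.
  have : 0 <= (m2 - m1) * (2 * x - m1 - m2) by apply: mulr_ge0; lra.
  nra.
- rewrite f_ge0 f_rad// [`|x|]ger0_norm; last lra.
  by rewrite ler_norml; apply/andP; split; lra.
Qed.

Lemma gauss_conv_radial : radially_nondecreasing (gauss_conv f).
Proof.
have conv_norm m : gauss_conv f `|m| = gauss_conv f m.
  have [m_ge0|m_lt0] := leP 0 m; first by rewrite ger0_norm.
  by rewrite (ltr0_norm m_lt0) gauss_convN.
move=> x y xy; rewrite -conv_norm -(conv_norm y).
by apply: gauss_conv_le; rewrite normr_ge0.
Qed.

End gaussian_smoothing.

Lemma radial_expR_mul (R : realType) (g l a : R) (E : R -> \bar R) : 0 <= g ->
  (forall x, (0 <= E x)%E) -> radially_nondecreasing E ->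
  radially_nondecreasing (fun D => (expR (g * (l + D ^+ 2)))%:E * E (a * D)%R)%E.
Proof.
move=> g_ge0 E_ge0 E_rad x y xy; apply: lee_pmul; rewrite ?E_ge0 ?lee_fin ?expR_ge0//.
- rewrite ler_expR ler_wpM2l// lerD2l.
  by rewrite -(real_normK (num_real x)) -(real_normK (num_real y)) lerXn2r ?nnegrE.
- by apply: E_rad; rewrite !normrM ler_wpM2l.
Qed.

Section value_iteration.
Variables (R : realType) (a sigma gamma lambda p01 p10 : R).
Hypotheses (gamma_ge0 : 0 <= gamma) (p01_01 : 0 <= p01 <= 1) (p10_01 : 0 <= p10 <= 1).

Lemma chanP_ge0 c c' : 0 <= chanP p01 p10 c c'.
Proof.
by move: p01_01 p10_01 => /andP[? ?] /andP[? ?]; case: c; case: c'; rewrite /= ?subr_ge0.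
Qed.

Section value_iteration_step.
Variable V : R -> bool -> \bar R.
Hypotheses (V_ge0 : forall x b, (0 <= V x b)%E)
  (V_rad : forall b, radially_nondecreasing (V^~ b)).

Lemma expect_ge0 c m : (0 <= expect sigma p01 p10 V c m)%E.
Proof.
by rewrite adde_ge0// mule_ge0 ?lee_fin ?chanP_ge0//; exact: gauss_conv_ge0.
Qed.

Lemma expect_radial c : radially_nondecreasing (expect sigma p01 p10 V c).
Proof.
move=> x y xy; apply: leeD;
  (apply: lee_wpmul2l; first by rewrite lee_fin chanP_ge0); exact: gauss_conv_radial.
Qed.

Local Notation Q := (Qstep a sigma gamma lambda p01 p10 V).

Lemma Qstep_ge0 D c u : (0 <= Q D c u)%E.
Proof.
by rewrite /Qstep; case: u; case: c; rewrite mule_ge0 ?lee_fin ?expR_ge0 ?expect_ge0.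
Qed.

Lemma Qstep_radial c u : radially_nondecreasing (fun D => Q D c u).
Proof.
have wait_eq D : expR (gamma * D ^+ 2) = expR (gamma * (0 + D ^+ 2)) by rewrite add0r.
have cost_radial l c' : radially_nondecreasing
    (fun D => (expR (gamma * (l + D ^+ 2)))%:E * expect sigma p01 p10 V c' (a * D))%E.
  exact: radial_expR_mul gamma_ge0 (expect_ge0 c') (expect_radial c').
rewrite /Qstep; case: u; case: c.
- by move=> x y _; exact: lexx.
- exact: cost_radial.
- by move=> x y; rewrite !wait_eq; exact: cost_radial.
- by move=> x y; rewrite !wait_eq; exact: cost_radial.
Qed.

Lemma Qstep_wait_le_bad D : 0 <= lambda -> (Q D false false <= Q D false true)%E.
Proof.
move=> lambda_ge0; rewrite /Qstep lee_wpmul2r ?expect_ge0// lee_fin ler_expR.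
by rewrite ler_wpM2l// lerDr.
Qed.

End value_iteration_step.

Local Notation V := (Vfun a sigma gamma lambda p01 p10).

Lemma VfunS t x b : V t.+1 x b =
  Order.min (Qstep a sigma gamma lambda p01 p10 (V t) x b false)
            (Qstep a sigma gamma lambda p01 p10 (V t) x b true).
Proof. by []. Qed.

Lemma Vfun_ge0_radial t :
  (forall x b, (0 <= V t x b)%E) /\ (forall b, radially_nondecreasing (V t ^~ b)).
Proof.
elim: t => [|t [V_ge0 V_rad]]; first by split=> // b x y.
split=> [x b | b]; first by rewrite VfunS le_min !Qstep_ge0.
by under eq_fun do rewrite VfunS; apply: radial_min; exact: Qstep_radial.
Qed.

End value_iteration.

Section radial_threshold.
Variables (R : realType) (f : R -> \bar R) (k : \bar R).

Definition radial_threshold : \bar R :=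
  ereal_sup (0%E |` [set (`|D|)%:E | D in [set D | (f D <= k)%E]]).

Lemma radial_threshold_ge0 : (0 <= radial_threshold)%E.
Proof. by apply: ereal_sup_ubound; left. Qed.

Lemma radial_threshold_lt D : (radial_threshold < (`|D|)%:E)%E -> (k < f D)%E.
Proof.
move=> thr_lt; rewrite ltNge; apply/negP => fD_le.
have : ((`|D|)%:E <= radial_threshold)%E by apply: ereal_sup_ubound; right; exists D.
by rewrite leNgt thr_lt.
Qed.

Lemma lt_radial_threshold D : radially_nondecreasing f ->
  ((`|D|)%:E < radial_threshold)%E -> (f D <= k)%E.
Proof.
move=> f_rad /ereal_sup_gt[_ [->|[D' fD'_le <-]]]; first by rewrite lte_fin normr_lt0.
by rewrite lte_fin => /ltW /f_rad fDD'; exact: le_trans fDD' fD'_le.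
Qed.

End radial_threshold.

Theorem corollary1 (R : realType) (a sigma gamma lambda p01 p10 : R) (T : nat) :
  0 < sigma -> 0 < gamma -> 0 < lambda -> (1 <= T)%N ->
  0 <= p01 <= 1 -> 0 <= p10 <= 1 ->
  exists (phi : nat -> R -> bool -> bool) (thr : nat -> bool -> \bar R),
    forall t : nat, (1 <= t <= T)%N -> forall c : bool,
      (0 <= thr t c)%E /\
      forall D : R,
        (forall u : bool,
            (Qfun a sigma gamma lambda p01 p10 t D c (phi t D c)
             <= Qfun a sigma gamma lambda p01 p10 t D c u)%E) /\
        ((thr t c < (`|D|)%:E)%E -> phi t D c = true) /\
        (((`|D|)%:E < thr t c)%E -> phi t D c = false).
Proof.
move=> _ /ltW gamma_ge0 /ltW lambda_ge0 _ p01_01 p10_01.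
pose Q t D c u := Qfun a sigma gamma lambda p01 p10 t D c u.
exists (fun t D c => c && (Q t D c true < Q t D c false)%E).
exists (fun t c => if c then radial_threshold (fun D => Q t D true false) (Q t 0 true true)
                   else +oo%E).
move=> t _ c; have [V_ge0 V_rad] := Vfun_ge0_radial a sigma lambda gamma_ge0 p01_01 p10_01 t.-1.
have transmit_good D : Q t D true true = Q t 0 true true by [].
case: c.
- split=> [|D]; first exact: radial_threshold_ge0.
  split; [|split].
  + by case: ltP => [/ltW Q_lt|Q_le] [].
  + by move=> /radial_threshold_lt; rewrite transmit_good => ->.
  + move=> /lt_radial_threshold-/(_ (Qstep_radial a sigma lambda gamma_ge0 p01_01 p10_01
      V_ge0 V_rad true false)).
    by rewrite -(transmit_good D) leNgt => /negbTE ->.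
- split=> [|D]; first exact: leey.
  by split; [case=> //; exact: Qstep_wait_le_bad | split].
Qed.
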